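(* Let $\lambda_{\max}>1$ and let $F:[0,\lambda_{\max}]\to\mathbb{R}_+$ be a continuously differentiable concave function with $F(0)=0$, such that $F(x)<F^\star$ for all $x\in[0,1)$ and $F'(1)>0$. Suppose moreover that $F$ is thrice continuously differentiable on $[0,1)$, that $\lim_{x\to1^-}F''(x)<0$, and that $\sup_{x<1}|F^{(3)}(x)|\le M$ for some $M<\infty$. Then there exist $C_1,\varepsilon_0>0$ (depending on $F$) such that $q^\star(\varepsilon)\ge C_1/\sqrt{\varepsilon}$ for all $\varepsilon\in(0,\varepsilon_0]$.
   Context: A control policy is a function $\lambda:\mathbb{Z}_+\to[0,\lambda_{\max}]$; it defines a continuous-time birth–death chain on $\mathbb{Z}_+$ with rate $\lambda(q)$ from $q$ to $q+1$ and rate $1$ from $q$ to $q-1$ ($q\ge1$). Let $\mathcal S$ be the set of states reachable from $0$. The policy is stable if $\sum_{i\in\mathcal S}\prod_{q=0}^{i}\lambda(q)<\infty$ (positive recurrence on $\mathcal S$); then $\pi$ is its stationary distribution and $\bar q\sim\pi$. $F^\star=\sup\{\mathbb{E}_\alpha[F(X)]:\alpha$ a probability measure on $[0,\lambda_{\max}]$, $X\sim\alpha$, $\mathbb{E}_\alpha[X]\le1\}$; regret $R(\lambda)=F^\star-\mathbb{E}_\pi[F(\lambda(\bar q))]$; $q^\star(\varepsilon)=\inf\{\mathbb{E}_\pi[\bar q]:\lambda$ stable, $R(\lambda)\le\varepsilon\}$. *)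

From HB Require Import structures.
From mathcomp Require Import all_boot all_order all_algebra.
From mathcomp Require Import all_classical all_reals all_analysis.
Set Implicit Arguments. Unset Strict Implicit. Unset Printing Implicit Defensive.
Import Order.TTheory GRing.Theory Num.Theory.
Import numFieldNormedType.Exports.
Local Open Scope classical_set_scope.
Local Open Scope ring_scope.

Section Defs.
Variable R : realType.

Definition deriv_within (A : set R) (f : R -> R) (x d : R) : Prop :=
  (fun y => (f y - f x) / (y - x)) @ within (fun y => A y /\ y != x) (nbhs x)
    --> d.

Definition concave_on (A : set R) (f : R -> R) : Prop :=
  forall x y t, A x -> A y -> 0 <= t <= 1 ->
    (1 - t) * f x + t * f y <= f ((1 - t) * x + t * y).

(** A probability measure on [0,lmax] is represented as a probability measure
    on (the Borel sets of) R giving full mass to [0,lmax]. *)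
Definition Fstar (F : R -> R) (lmax : R) : \bar R :=
  ereal_sup [set v | exists P : probability R R,
     P [set` `[0, lmax]] = 1%E /\
     (\int[P]_(x in [set` `[0%R, lmax]%R]) x%:E <= 1)%E /\
     v = (\int[P]_(x in [set` `[0%R, lmax]%R]) (F x)%:E)%E].

Definition policy (lmax : R) (lam : nat -> R) : Prop :=
  forall q, 0 <= lam q <= lmax.

(** states reachable from 0 in the birth-death chain
    (rate lam q from q to q+1, rate 1 from q+1 to q) *)
Inductive reach (lam : nat -> R) : nat -> Prop :=
| reach0 : reach lam 0
| reach_up q : reach lam q -> 0 < lam q -> reach lam q.+1
| reach_down q : reach lam q.+1 -> reach lam q.

Definition stable (lam : nat -> R) : Prop :=
  (\sum_(0 <= i <oo) (if `[< reach lam i >] then (\prod_(q < i.+1) lam q)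
                     else 0)%:E < +oo)%E.

(** pi is a stationary distribution of the chain: a probability distribution
    on Z_+ satisfying the global balance equations pi Q = 0 of the generator Q
    (Q(q,q+1) = lam q, Q(q+1,q) = 1). *)
Definition stationary (lam : nat -> R) (pi : nat -> R) : Prop :=
  (forall i, 0 <= pi i) /\
  (\sum_(0 <= i <oo) (pi i)%:E = 1)%E /\
  (pi 0%N * lam 0%N = pi 1%N) /\
  (forall i, pi i.+1 * (lam i.+1 + 1) = pi i * lam i + pi i.+2).

Definition reward (F : R -> R) (lam pi : nat -> R) : \bar R :=
  (\sum_(0 <= i <oo) (pi i * F (lam i))%:E)%E.

Definition mean_queue (pi : nat -> R) : \bar R :=
  (\sum_(0 <= i <oo) (i%:R * pi i)%:E)%E.

Definition regret (F : R -> R) (lmax : R) (lam pi : nat -> R) : \bar R :=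
  (Fstar F lmax - reward F lam pi)%E.

Definition qstar (F : R -> R) (lmax : R) (eps : R) : \bar R :=
  ereal_inf [set m | exists lam pi : nat -> R,
     policy lmax lam /\ stable lam /\ stationary lam pi /\
     (regret F lmax lam pi <= eps%:E)%E /\ m = mean_queue pi].

End Defs.

From HB Require Import structures.
From mathcomp Require Import all_boot all_order all_algebra.
From mathcomp Require Import all_classical all_reals all_analysis.
From mathcomp Require Import ring lra.
Import Order.TTheory GRing.Theory Num.Theory.
Import numFieldNormedType.Exports.
Local Open Scope classical_set_scope.
Local Open Scope ring_scope.

(* Concavity of [F] and [F''(1-) < 0] put [F] quadratically below its tangent
   at 1: [F x <= F 1 + F'(1) (x - 1) - c max(1 - x, 0)^2] on [[0, lmax]];
   moreover [F^* >= F 1]. In a stationary birth-death chain detailed balance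
   reads [pi (i+1) = pi i * lam i], so [sum_i pi i (lam i - 1)] telescopes and
   regret at most [eps] forces [sum_i pi i max(1 - lam i, 0)^2 = O(eps)].
   Telescoping again, [pi j - pi M = sum_(j <= i < M) pi i (1 - lam i)], which
   AM-GM bounds by [O(sqrt eps)]. A distribution whose atoms are all
   [O(sqrt eps)] has mean [Omega(1 / sqrt eps)]. *)

Section Concave.
Context {R : realType}.
Implicit Types (f : R -> R) (A : set R).

Definition slope f x y := (f y - f x) / (y - x).

Lemma slopeC f x y : slope f x y = slope f y x.
Proof. by rewrite /slope -opprB -[y - x]opprB invrN mulrNN. Qed.

Lemma concave_slope_le {A f x y z} : concave_on A f -> A x -> A z ->
  x < y -> y < z -> slope f y z <= slope f x y.
Proof.
move=> concf Ax Az xy yz.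
have zx : 0 < z - x by lra.
set t := (y - x) / (z - x).
have t01 : 0 <= t <= 1.
  by rewrite divr_ge0 ?ler_pdivrMr ?mul1r /=; lra.
have := concf x z t Ax Az t01.
have -> : (1 - t) * x + t * z = y by rewrite /t; field; rewrite gt_eqF.
have -> : (1 - t) * f x + t * f z = ((z - y) * f x + (y - x) * f z) / (z - x).
  by rewrite /t; field; rewrite gt_eqF.
rewrite ler_pdivrMr // /slope => conc.
rewrite ler_pdivrMr ?subr_gt0 // mulrAC ler_pdivlMr ?subr_gt0 //; nra.
Qed.

Lemma concave_tangent_right {f u v x0 x d} :
  concave_on `[u, v] f -> deriv_within `[u, v] f x0 d ->
  u < x0 -> x0 < x -> x <= v -> f x <= f x0 + d * (x - x0).
Proof.
move=> concf df ux0 x0x xv.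
suff : slope f x0 x <= d by rewrite ler_pdivrMr ?subr_gt0 //; lra.
rewrite leNgt; apply/negP => d_lt.
have [e /= e_gt0 near_x0] := cvgr_lt _ df _ d_lt.
set y := x0 - Num.min e (x0 - u) / 2.
have m_gt0 : 0 < Num.min e (x0 - u) by rewrite lt_min e_gt0 subr_gt0.
have [me mx] : Num.min e (x0 - u) <= e /\ Num.min e (x0 - u) <= x0 - u.
  by split; rewrite ge_min lexx ?orbT.
have Ay : [set` `[u, v]] y by rewrite /= in_itv /= /y; apply/andP; split; lra.
have Ax : [set` `[u, v]] x by rewrite /= in_itv /=; apply/andP; split; lra.
have yx0 : y < x0 by rewrite /y; lra.
have := concave_slope_le concf Ay Ax yx0 x0x.
have : slope f x0 y < slope f x0 x.
  apply: near_x0; last by split; [rewrite inE | rewrite lt_eqF].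
  by rewrite /ball /= /y opprB addrC subrK ger0_norm; lra.
rewrite (slopeC f x0 y); lra.
Qed.

End Concave.

Section Derivatives.
Context {R : realType}.
Implicit Types (f : R -> R) (A : set R).

Lemma deriv_within_is_derive {A f u v x d} : (forall y, u < y < v -> A y) ->
  u < x < v -> deriv_within A f x d -> is_derive x 1 f d.
Proof.
move=> uvA /andP[ux xv] df.
set r := Num.min (x - u) (v - x).
have r_gt0 : 0 < r by rewrite lt_min !subr_gt0 ux xv.
have [rxu rvx] : r <= x - u /\ r <= v - x by split; rewrite ge_min lexx ?orbT.
have quot : (fun h => h^-1 *: ((f \o shift x) (h *: 1) - f x)) @ 0^' --> d.
  have -> : (fun h => h^-1 *: ((f \o shift x) (h *: 1) - f x)) =
      slope f x \o shift x.
    apply/funext => h; rewrite /= /slope /shift /= addrK mulrC.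
    by rewrite -[h%:A]/(h * 1) mulr1.
  apply: cvg_comp df => S /= [e /= e_gt0 eS].
  exists (Num.min e r) => /=; first by rewrite lt_min e_gt0.
  move=> h; rewrite /ball /= sub0r normrN lt_min => /andP[he hr] h_neq0.
  apply: eS; first by rewrite /ball /= opprD addrCA subrr addr0 normrN.
  split; last by rewrite -subr_eq0 addrK.
  by apply: uvA; move: hr; rewrite ltr_norml; lra.
by apply: DeriveDef; [apply/cvg_ex; exists d | apply/cvg_lim].
Qed.

Lemma MVT_ge {f} {df : R -> R} {a b k : R} : a < b ->
  (forall x, a < x < b -> is_derive x 1 f (df x)) ->
  {within `[a, b], continuous f} -> (forall x, a < x < b -> k <= df x) ->
  k * (b - a) <= f b - f a.
Proof.
move=> ab fdf fc kdf.
have fdf' x : x \in `]a, b[ -> is_derive x 1 f (df x) by rewrite in_itv => /fdf.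
have [c /[!in_itv]/= c_ab ->] := MVT ab fdf' fc.
by rewrite ler_pM2r ?subr_gt0 // kdf.
Qed.

Lemma MVT_le {f} {df : R -> R} {a b k : R} : a < b ->
  (forall x, a < x < b -> is_derive x 1 f (df x)) ->
  {within `[a, b], continuous f} -> (forall x, a < x < b -> df x <= k) ->
  f b - f a <= k * (b - a).
Proof.
move=> ab fdf fc dfk.
have fdf' x : x \in `]a, b[ -> is_derive x 1 f (df x) by rewrite in_itv => /fdf.
have [c /[!in_itv]/= c_ab ->] := MVT ab fdf' fc.
by rewrite ler_pM2r ?subr_gt0 // dfk.
Qed.

End Derivatives.

Section QuadraticGap.
Context {R : realType}.
Variables (lmax d k : R) (F F1 F2 : R -> R).
Implicit Types a b x y z : R.
Hypothesis lmax_gt1 : 1 < lmax.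
Hypothesis F_deriv :
  forall x, 0 <= x <= lmax -> deriv_within `[0, lmax] F x (F1 x).
Hypothesis F1_cont : {within `[0, lmax], continuous F1}.
Hypothesis F_concave : concave_on `[0, lmax] F.
Hypotheses (d_gt0 : 0 < d) (d_le : d <= 1 / 2) (k_gt0 : 0 < k).
Hypothesis F1_deriv : forall x, 1 - d < x < 1 -> is_derive x 1 F1 (F2 x).
Hypothesis F2_le : forall x, 1 - d < x < 1 -> F2 x <= - k.

(* [lra] ignores section hypotheses, hence the [move: lmax_gt1 ...] below. *)

Let F_is_derive x : 0 < x < lmax -> is_derive x 1 F (F1 x).
Proof.
move=> x_in; apply: (deriv_within_is_derive _ x_in); last first.
  by apply: F_deriv; move: x_in => /andP[x_gt0 x_lt]; rewrite !ltW.
by move=> y /andP[y_gt0 y_lt]; rewrite /= in_itv /= !ltW.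
Qed.

Let F_continuous a b : 0 < a -> b < lmax -> {within `[a, b], continuous F}.
Proof.
move=> a_gt0 b_lt.
apply: derivable_within_continuous => x /[!in_itv]/= /andP[ax xb].
by have [] : is_derive x 1 F (F1 x) by apply: F_is_derive; lra.
Qed.

Let F1_ge_near1 y : 1 - d <= y <= 1 -> F1 1 + k * (1 - y) <= F1 y.
Proof.
move: lmax_gt1 d_le => ? ? /andP[dy y1].
have [y_lt1|y_ge1] := ltP y 1; last first.
  have -> : y = 1 by lra.
  by rewrite subrr mulr0 addr0.
have F1_cont_y1 : {within `[y, 1], continuous F1}.
  have [y_ge0 lmax_ge1] : 0 <= y /\ 1 <= lmax by split; lra.
  by apply: continuous_subspaceW F1_cont; apply: subset_itv; rewrite bnd_simp.
have near1 x : y < x < 1 -> 1 - d < x < 1.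
  by case/andP => yx x1; apply/andP; split; lra.
have := MVT_le y_lt1 (fun x => F1_deriv x \o near1 x) F1_cont_y1
  (fun x => F2_le x \o near1 x).
lra.
Qed.

Let gap_near1 x : 1 - d <= x <= 1 ->
  F x <= F 1 + F1 1 * (x - 1) - k / 4 * (1 - x) ^+ 2.
Proof.
move: lmax_gt1 d_le k_gt0 => ? ? ? /andP[dx x1].
have [x_lt1|x_ge1] := ltP x 1; last first.
  have -> : x = 1 by lra.
  by rewrite subrr mulr0 addr0 expr0n /= mulr0 subr0.
(* MVT on both halves of [[x, 1]]; on the left half [F1] exceeds [F1 1] by at
   least [k * (1 - x) / 2]. *)
set m := (x + 1) / 2.
have F1_ge z : x < z < 1 -> F1 1 + k * (1 - z) <= F1 z.
  by case/andP=> xz z1; apply: F1_ge_near1; lra.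
have left : (F1 1 + k * (1 - x) / 2) * (m - x) <= F m - F x.
  apply: (MVT_ge (df := F1)); rewrite /m.
  - lra.
  - by move=> z /andP[xz zm]; apply: F_is_derive; lra.
  - by apply: F_continuous; lra.
  - move=> z /andP[xz zm]; have : F1 1 + k * (1 - z) <= F1 z by apply: F1_ge; lra.
    nra.
have right : F1 1 * (1 - m) <= F 1 - F m.
  apply: (MVT_ge (df := F1)); rewrite /m.
  - lra.
  - by move=> z /andP[mz z1]; apply: F_is_derive; lra.
  - by apply: F_continuous; lra.
  - move=> z /andP[mz z1]; have : F1 1 + k * (1 - z) <= F1 z by apply: F1_ge; lra.
    nra.
rewrite /m in left right; nra.
Qed.

Let gap_far x : 0 <= x < 1 - d ->
  F x <= F 1 + F1 1 * (x - 1) - k * d / 4 * (1 - x).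
Proof.
move: lmax_gt1 d_gt0 d_le k_gt0 => ? ? ? ? /andP[x_ge0 x_lt].
have Ax : [set` `[0, lmax]] x by rewrite /= in_itv /=; apply/andP; split; lra.
have A1 : [set` `[0, lmax]] 1 by rewrite /= in_itv /=; apply/andP; split; lra.
have slope_le : slope F (1 - d) 1 <= slope F x (1 - d).
  by apply: (concave_slope_le F_concave Ax A1); lra.
have gap_d : F (1 - d) <= F 1 + F1 1 * (1 - d - 1) - k / 4 * (1 - (1 - d)) ^+ 2.
  by apply: gap_near1; lra.
have slope_d1 : slope F (1 - d) 1 * d = F 1 - F (1 - d).
  by rewrite /slope subKr divfK ?gt_eqF.
have slope_xd : slope F x (1 - d) * (1 - d - x) = F (1 - d) - F x.
  by rewrite /slope divfK // gt_eqF // subr_gt0.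
have slope_d1_ge : F1 1 + k * d / 4 <= slope F (1 - d) 1.
  by rewrite -(ler_pM2r d_gt0) slope_d1; nra.
have : (F1 1 + k * d / 4) * (1 - d - x) <= F (1 - d) - F x.
  rewrite -slope_xd; apply: ler_wpM2r; first by lra.
  exact: le_trans slope_d1_ge slope_le.
nra.
Qed.

Let gap_right x : 1 <= x <= lmax -> F x <= F 1 + F1 1 * (x - 1).
Proof.
move: lmax_gt1 => ? /andP[x_ge1 x_le]; have [x_gt1|x_le1] := ltP 1 x; last first.
  have -> : x = 1 by lra.
  by rewrite subrr mulr0 addr0.
apply: (concave_tangent_right F_concave _ ltr01 x_gt1 x_le).
by apply: F_deriv; lra.
Qed.

Lemma quadratic_gap x : 0 <= x <= lmax ->
  F x <= F 1 + F1 1 * (x - 1) - k * d / 4 * Num.max (1 - x) 0 ^+ 2.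
Proof.
move: d_gt0 d_le k_gt0 => ? ? ? /andP[x_ge0 x_le].
have kd_gt0 : 0 < k * d / 4 by rewrite !mulr_gt0.
have [x_ge1|x_lt1] := leP 1 x.
  have -> : Num.max (1 - x) 0 = 0 by apply/max_idPr; lra.
  by rewrite expr0n /= mulr0 subr0 gap_right // x_ge1.
have -> : Num.max (1 - x) 0 = 1 - x by apply/max_idPl; lra.
have [x_far|x_near] := ltP x (1 - d).
  have : k * d / 4 * (1 - x) ^+ 2 <= k * d / 4 * (1 - x).
    by rewrite ler_pM2l // expr2 ler_piMl //; lra.
  have := gap_far x; rewrite x_ge0 x_far; lra.
have : k * d / 4 * (1 - x) ^+ 2 <= k / 4 * (1 - x) ^+ 2.
  by rewrite ler_wpM2r ?sqr_ge0 //; nra.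
have := gap_near1 x; rewrite x_near (ltW x_lt1); lra.
Qed.

End QuadraticGap.

Lemma concave_quadratic_gap {R : realType} {lmax L : R} {F F1 F2 : R -> R} :
  1 < lmax ->
  (forall x, 0 <= x <= lmax -> deriv_within `[0, lmax] F x (F1 x)) ->
  {within `[0, lmax], continuous F1} -> concave_on `[0, lmax] F ->
  (forall x, 0 <= x < 1 -> deriv_within `[0, 1[ F1 x (F2 x)) ->
  L < 0 -> F2 x @[x --> 1^'-] --> L ->
  exists2 c, 0 < c & forall x, 0 <= x <= lmax ->
    F x <= F 1 + F1 1 * (x - 1) - c * Num.max (1 - x) 0 ^+ 2.
Proof.
move=> lmax_gt1 F_deriv F1_cont F_concave F1_deriv L_lt0 F2_L.
have L_lt : L < L / 2 by lra.
have [e /= e_gt0 F2_near] := cvgr_le _ F2_L _ L_lt.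
set d := Num.min (e / 2) (1 / 2).
have [d_le_e d_le] : d <= e / 2 /\ d <= 1 / 2 by split; rewrite ge_min lexx ?orbT.
have d_gt0 : 0 < d by rewrite lt_min; apply/andP; split; lra.
exists (- L / 2 * d / 4); first by rewrite !mulr_gt0 //; lra.
apply: (@quadratic_gap _ lmax d (- L / 2) F F1 F2) => //; first lra.
- move=> x /andP[x_gt x_lt1].
  apply: (@deriv_within_is_derive _ _ _ 0 1 _ _ _ _ (F1_deriv x _)); last lra.
    by move=> y /andP[y_gt0 y_lt1]; rewrite /= in_itv /= ltW.
  by apply/andP; split; lra.
- move=> x /andP[x_gt x_lt1].
  suff : F2 x <= L / 2 by lra.
  by apply: (F2_near x _ x_lt1); rewrite /ball /= ger0_norm; lra.
Qed.

Section NonnegSeries.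
Context {R : realType} {u : nat -> R}.
Hypothesis u_ge0 : forall i, 0 <= u i.

Lemma psum_le_nneseries N :
  ((\sum_(0 <= i < N) u i)%:E <= \sum_(0 <= i <oo) (u i)%:E)%E.
Proof.
rewrite -sumEFin.
by apply: (nneseries_lim_ge (P := xpredT)) => n _ _; rewrite lee_fin.
Qed.

Lemma nneseries_gt_psum x :
  (x%:E < \sum_(0 <= i <oo) (u i)%:E)%E -> exists N, x < \sum_(0 <= i < N) u i.
Proof.
move=> x_lt; apply: contrapT => psum_le.
suff : (\sum_(0 <= i <oo) (u i)%:E <= x%:E)%E by rewrite leNgt x_lt.
apply: lime_le; first by apply: is_cvg_nneseries => n _ _; rewrite lee_fin.
apply: nearW => N; rewrite sumEFin lee_fin leNgt; apply/negP => x_lt_N.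
by apply: psum_le; exists N.
Qed.

End NonnegSeries.

Lemma concave_at1_le_of_lt {R : realType} {lmax : R} {F : R -> R} {v : \bar R} :
  1 <= lmax -> concave_on `[0, lmax] F -> F 0 = 0 ->
  (forall x, 0 <= x < 1 -> ((F x)%:E < v)%E) -> ((F 1)%:E <= v)%E.
Proof.
move=> lmax_ge1 F_concave F0 F_lt.
have A0 : [set` `[0, lmax]] 0 by rewrite /= in_itv /= lexx; lra.
have A1 : [set` `[0, lmax]] 1 by rewrite /= in_itv /=; apply/andP; split; lra.
have chord x : 0 <= x <= 1 -> x * F 1 <= F x.
  move=> x_in; have := F_concave 0 1 x A0 A1 x_in.
  by rewrite F0 !mulr0 !add0r mulr1.
have := F_lt 0; rewrite lexx ltr01 F0 => /(_ erefl).
case: v F_lt => [r| |] // F_lt; rewrite ?leey // lte_fin => r_gt0.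
rewrite lee_fin leNgt; apply/negP => r_lt.
set x := (r / F 1 + 1) / 2.
have F1_gt0 : 0 < F 1 by lra.
have xF1 : x * F 1 = (r + F 1) / 2 by rewrite /x; field; rewrite gt_eqF.
have [x_ge0 x_lt1] : 0 <= x /\ x < 1.
  have : 0 < r / F 1 < 1 by rewrite divr_gt0 //= ltr_pdivrMr ?mul1r.
  by case/andP; rewrite /x; split; lra.
have := F_lt x; rewrite x_ge0 x_lt1 lte_fin => /(_ erefl).
have := chord x; rewrite x_ge0 ltW // xF1 => /(_ erefl).
lra.
Qed.

Lemma stationary_detailed_balance {R : realType} {lam pi : nat -> R} :
  stationary lam pi -> forall i, pi i.+1 = pi i * lam i.
Proof.
move=> [_ [_ [balance0 balance]]]; elim => [|i IH]; first by rewrite balance0.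
by have := balance i; rewrite -IH; lra.
Qed.

Section StationaryDensity.
Context {R : realType} {lam pi : nat -> R} {G : R -> R} {a b c : R}.
Local Notation h i := (Num.max (1 - lam i) 0).

Hypothesis pi_ge0 : forall i, 0 <= pi i.
Hypothesis pi_rec : forall i, pi i.+1 = pi i * lam i.
Hypothesis pi_mass : (\sum_(0 <= i <oo) (pi i)%:E = 1)%E.
Hypothesis G_ge0 : forall i, 0 <= G (lam i).
Hypothesis G_gap : forall i, G (lam i) <= b + a * (lam i - 1) - c * h i ^+ 2.

Let psum_le1 N : \sum_(0 <= i < N) pi i <= 1.
Proof. by rewrite -lee_fin -pi_mass psum_le_nneseries. Qed.

Let pi_cvg0 : pi i @[i --> \oo] --> 0.
Proof. by apply/cvg_series_cvg_0/nnseries_is_cvg => //; rewrite pi_mass ltry. Qed.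

Let pi_sub_telescope j M : (j <= M)%N ->
  pi j - pi M = \sum_(j <= i < M) pi i * (1 - lam i).
Proof.
move=> jM; rewrite -opprB -telescope_sumr // -sumrN.
by apply: eq_bigr => i _; rewrite pi_rec; ring.
Qed.

Let psum_gap_le M : 0 <= a -> 0 <= b ->
  \sum_(0 <= i < M) pi i * G (lam i) <=
  b + a * pi M - c * \sum_(0 <= i < M) pi i * h i ^+ 2.
Proof.
move=> a_ge0 b_ge0.
have step i : pi i * G (lam i) <=
    b * pi i + a * (pi i.+1 - pi i) - c * (pi i * h i ^+ 2).
  rewrite pi_rec; have := ler_wpM2l (pi_ge0 i) (G_gap i); lra.
apply: le_trans (ler_sum_nat (fun i _ => step i)) _.
rewrite !big_split /= sumrN -!mulr_sumr telescope_sumr //.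
have := psum_le1 M; have := pi_ge0 0; nra.
Qed.

Let pi_sub_le {j M s} : (j <= M)%N -> 0 < s ->
  pi j - pi M <= (\sum_(0 <= i < M) pi i * h i ^+ 2) / (2 * s) + s / 2.
Proof.
move=> jM s_gt0.
have amgm x : x <= x ^+ 2 / (2 * s) + s / 2.
  rewrite -subr_ge0 (_ : _ - x = (x - s) ^+ 2 / (2 * s)).
    by rewrite divr_ge0 ?sqr_ge0 // mulr_ge0 // ltW.
  by field; rewrite gt_eqF.
rewrite pi_sub_telescope //.
apply: (@le_trans _ _ (\sum_(0 <= i < M) pi i * h i)).
  rewrite (@big_cat_nat _ _ _ j 0 M _ _ (leq0n j) jM) /=.
  rewrite -[X in X <= _]add0r lerD //.
    by rewrite sumr_ge0 // => i _; rewrite mulr_ge0 // le_max lexx orbT.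
  by apply: ler_sum_nat => i _; rewrite ler_wpM2l // le_max lexx.
apply: (@le_trans _ _
  (\sum_(0 <= i < M) (pi i * h i ^+ 2 / (2 * s) + pi i * s / 2))).
  apply: ler_sum_nat => i _; rewrite -!mulrA -mulrDr ler_wpM2l //.
  by rewrite mulrA -expr2 amgm.
rewrite big_split /= -!mulr_suml lerD2l ler_pdivrMr // mulrAC ler_pdivlMr //.
by rewrite -mulrA ler_piMl ?psum_le1 // mulr_ge0 // ltW.
Qed.

Lemma stationary_density_le {eps} : 0 <= a -> 0 <= b -> 0 < c -> 0 < eps ->
  (exists N, b - 2 * eps < \sum_(0 <= i < N) pi i * G (lam i)) ->
  forall j, pi j <= eps + ((2 + a) / (2 * c) + 1 / 2) * Num.sqrt eps.
Proof.
move=> a_ge0 b_ge0 c_gt0 eps_gt0 [N reward_N] j.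
have [M0 _ pi_small] := cvgr_le _ pi_cvg0 _ eps_gt0.
set M := maxn M0 (maxn N j).
have piM : pi M <= eps by apply: pi_small; rewrite /= leq_maxl.
have [NM jM] : (N <= M)%N /\ (j <= M)%N by rewrite !leq_max !leqnn !orbT.
set T := \sum_(0 <= i < M) pi i * h i ^+ 2.
have reward_NM :
    \sum_(0 <= i < N) pi i * G (lam i) <= \sum_(0 <= i < M) pi i * G (lam i).
  rewrite (@big_cat_nat _ _ _ N 0 M _ _ (leq0n N) NM) /= lerDl.
  by rewrite sumr_ge0 // => i _; rewrite mulr_ge0.
have cT : c * T <= (2 + a) * eps.
  have := psum_gap_le M a_ge0 b_ge0; rewrite -/T.
  have := ler_wpM2l a_ge0 piM; lra.
set s := Num.sqrt eps.
have s_gt0 : 0 < s by rewrite sqrtr_gt0.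
have eps_s : eps = s ^+ 2 by rewrite sqr_sqrtr // ltW.
have T_le : T / (2 * s) <= (2 + a) / (2 * c) * s.
  rewrite ler_pdivrMr ?mulr_gt0 //.
  have -> : (2 + a) / (2 * c) * s * (2 * s) = (2 + a) * eps / c.
    by rewrite eps_s; field; rewrite gt_eqF.
  by rewrite ler_pdivlMr // mulrC.
have := pi_sub_le jM s_gt0; rewrite -/T; lra.
Qed.

End StationaryDensity.

Lemma psum_mean_ge {R : realType} {p : nat -> R} {P : R} {N0 : nat} :
  0 < P -> (forall i, 0 <= p i) -> (forall i, p i <= P) ->
  3 / 4 < \sum_(0 <= i < N0) p i ->
  exists N, 1 / (8 * P) - 1 / 2 <= \sum_(0 <= i < N) i%:R * p i.
Proof.
move=> P_gt0 p_ge0 p_le mass_N0.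
(* The states below [K] carry mass at most [K * P <= 1/4], so mass at least 1/2
   sits on states [>= K ~ 1 / (4 * P)]. *)
set K := Num.truncn (1 / (4 * P)).
have /andP[K_le K_gt] : K%:R <= 1 / (4 * P) < K.+1%:R.
  by apply: truncn_itv; rewrite divr_ge0 // mulr_ge0 // ltW.
exists (maxn N0 K); set N := maxn N0 K.
have [N0N KN] : (N0 <= N)%N /\ (K <= N)%N by rewrite !leq_max !leqnn orbT.
have mass_low : \sum_(0 <= i < K) p i <= 1 / 4.
  apply: le_trans (_ : K%:R * P <= 1 / 4).
    apply: le_trans (ler_sum_nat (fun i _ => p_le i)) _.
    by rewrite sumr_const_nat subn0 mulr_natl.
  have -> : 1 / 4 = 1 / (4 * P) * P :> R by field; rewrite gt_eqF.
  by rewrite ler_wpM2r // ltW.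
have mass_high : 1 / 2 <= \sum_(K <= i < N) p i.
  have : \sum_(0 <= i < N0) p i <= \sum_(0 <= i < N) p i.
    rewrite (@big_cat_nat _ _ _ N0 0 N _ _ (leq0n N0) N0N) /= lerDl.
    exact: sumr_ge0.
  rewrite (@big_cat_nat _ _ _ K 0 N _ _ (leq0n K) KN) /=; lra.
have : K%:R * \sum_(K <= i < N) p i <= \sum_(0 <= i < N) i%:R * p i.
  rewrite (@big_cat_nat _ _ _ K 0 N _ _ (leq0n K) KN) /= mulr_sumr.
  rewrite -[X in X <= _]add0r lerD ?sumr_ge0 // => [i _|]; first exact: mulr_ge0.
  by apply: ler_sum_nat => i /andP[Ki _]; rewrite ler_wpM2r // ler_nat.
have -> : 1 / (8 * P) = 1 / (4 * P) / 2 by field; rewrite gt_eqF.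
have K_ge0 : 0 <= K%:R :> R by [].
rewrite -[K.+1%:R]natr1 in K_gt; nra.
Qed.

Lemma mean_queue_ge {R : realType} {p : nat -> R} {P : R} :
  0 < P -> (forall i, 0 <= p i) -> (forall i, p i <= P) ->
  (\sum_(0 <= i <oo) (p i)%:E = 1)%E ->
  ((1 / (8 * P) - 1 / 2)%:E <= mean_queue p)%E.
Proof.
move=> P_gt0 p_ge0 p_le p_mass.
have [N0 mass_N0] : exists N, 3 / 4 < \sum_(0 <= i < N) p i.
  by apply: nneseries_gt_psum => //; rewrite p_mass lte_fin; lra.
have [N mean_N] := psum_mean_ge P_gt0 p_ge0 p_le mass_N0.
have mean_ge0 i : 0 <= i%:R * p i by rewrite mulr_ge0.
by apply: le_trans _ (psum_le_nneseries mean_ge0 N); rewrite lee_fin.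
Qed.

Lemma mean_queue_ge_inv_sqrt {R : realType} {p : nat -> R} {K eps : R} :
  0 <= K -> 0 < eps <= (1 / (8 * (K + 1))) ^+ 2 ->
  (forall i, 0 <= p i) -> (\sum_(0 <= i <oo) (p i)%:E = 1)%E ->
  (forall j, p j <= eps + K * Num.sqrt eps) ->
  ((1 / (16 * (K + 1)) / Num.sqrt eps)%:E <= mean_queue p)%E.
Proof.
move=> K_ge0 /andP[eps_gt0 eps_le] p_ge0 p_mass p_le.
set s := Num.sqrt eps in p_le *.
have s_gt0 : 0 < s by rewrite sqrtr_gt0.
have s_le : s <= 1 / (8 * (K + 1)).
  have := ler_wsqrtr eps_le; rewrite sqrtr_sqr ger0_norm // divr_ge0 //.
  by rewrite mulr_ge0 //; lra.
have s_le' : 8 * (K + 1) * s <= 1.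
  by move: s_le; rewrite ler_pdivlMr ?mulr_gt0 //; lra.
have eps_le_s : eps <= s.
  have -> : eps = s ^+ 2 by rewrite sqr_sqrtr // ltW.
  nra.
have P_gt0 : 0 < (K + 1) * s by rewrite mulr_gt0 //; lra.
have p_le' j : p j <= (K + 1) * s by have := p_le j; lra.
apply: le_trans _ (mean_queue_ge P_gt0 p_ge0 p_le' p_mass); rewrite lee_fin.
have -> : 1 / (8 * ((K + 1) * s)) = 2 * (1 / (16 * (K + 1)) / s).
  by field; rewrite gt_eqF //; lra.
suff : 1 / 2 <= 1 / (16 * (K + 1)) / s by lra.
by rewrite ler_pdivlMr // mulrC ler_pdivlMr ?mulr_gt0 //; lra.
Qed.

Lemma regret_psum_gt {R : realType} {F : R -> R} {lmax : R} {lam pi : nat -> R}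
    {eps : R} :
  0 < eps -> (forall i, 0 <= pi i * F (lam i)) ->
  ((F 1)%:E <= Fstar F lmax)%E -> (regret F lmax lam pi <= eps%:E)%E ->
  exists N, F 1 - 2 * eps < \sum_(0 <= i < N) pi i * F (lam i).
Proof.
move=> eps_gt0 terms_ge0 F1_le regret_le; apply: nneseries_gt_psum => //.
have : (0 <= reward F lam pi)%E.
  by apply: nneseries_ge0 => i _ _; rewrite lee_fin.
move: regret_le F1_le; rewrite /regret /reward.
case: (\sum_(0 <= i <oo) _)%E => [r| |] //; last by rewrite ltry.
case: (Fstar F lmax) => [f| |] //=; rewrite !lee_fin ?lte_fin; lra.
Qed.

Theorem propositionC3 (R : realType) (lmax : R) (F F1 F2 F3 : R -> R) (M : R) :
  1 < lmax ->
  (forall x, 0 <= x <= lmax -> 0 <= F x) ->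
  (* F is continuously differentiable on [0, lmax] with derivative F1 *)
  (forall x, 0 <= x <= lmax -> deriv_within `[0, lmax] F x (F1 x)) ->
  {within `[0, lmax], continuous F1} ->
  concave_on `[0, lmax] F ->
  F 0 = 0 ->
  (forall x, 0 <= x < 1 -> ((F x)%:E < Fstar F lmax)%E) ->
  0 < F1 1 ->
  (* F is thrice continuously differentiable on [0, 1) *)
  (forall x, 0 <= x < 1 -> deriv_within `[0, 1[ F1 x (F2 x)) ->
  (forall x, 0 <= x < 1 -> deriv_within `[0, 1[ F2 x (F3 x)) ->
  {within `[0, 1[, continuous F3} ->
  (exists2 L : R, L < 0 & F2 x @[x --> 1^'-] --> L) ->
  (forall x, 0 <= x < 1 -> `|F3 x| <= M) ->
  exists C1 eps0 : R, [/\ 0 < C1, 0 < eps0 &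
    forall eps, 0 < eps <= eps0 ->
      ((C1 / Num.sqrt eps)%:E <= qstar F lmax eps)%E].
Proof.
move=> lmax_gt1 F_ge0 F_deriv F1_cont F_concave F0 F_lt_Fstar F1_gt0 F1_deriv
  _ _ [L L_lt0 F2_L] _.
have [c c_gt0 gap] := concave_quadratic_gap lmax_gt1 F_deriv F1_cont F_concave
  F1_deriv L_lt0 F2_L.
have F1_le_Fstar : ((F 1)%:E <= Fstar F lmax)%E.
  by apply: concave_at1_le_of_lt F_concave F0 F_lt_Fstar; lra.
have F_1_ge0 : 0 <= F 1 by apply: F_ge0; apply/andP; split; lra.
set K := (2 + F1 1) / (2 * c) + 1 / 2.
have K_ge0 : 0 <= K by rewrite /K addr_ge0 // divr_ge0 //; lra.
have K1_gt0 : 0 < K + 1 by lra.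
exists (1 / (16 * (K + 1))), ((1 / (8 * (K + 1))) ^+ 2).
split=> [||eps eps_in]; rewrite ?exprn_gt0 ?divr_gt0 ?mulr_gt0 //.
apply: le_ereal_inf_tmp => _ [lam [pi [lam_policy [_ [pi_stat [regret_le ->]]]]]].
have [pi_ge0 [pi_mass _]] := pi_stat.
have /andP[eps_gt0 _] := eps_in.
have F_lam_ge0 i : 0 <= F (lam i) by apply/F_ge0/lam_policy.
apply: (mean_queue_ge_inv_sqrt K_ge0 eps_in pi_ge0 pi_mass).
apply: (stationary_density_le pi_ge0 (stationary_detailed_balance pi_stat)
  pi_mass F_lam_ge0 (fun i => gap _ (lam_policy i)) (ltW F1_gt0) F_1_ge0 c_gt0
  eps_gt0).
exact: regret_psum_gt eps_gt0 (fun i => mulr_ge0 (pi_ge0 i) (F_lam_ge0 i))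
  F1_le_Fstar regret_le.
Qed.
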